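(* Let $G$, $A$, $H$, $\beta$, $\sigma$, $\delta$ be as in the context, and let $(K,v)$ be an $\omega$-pseudo complete valued field of characteristic $0$ with residue characteristic $p$ whose value group is $A$, the smallest nonzero convex subgroup of $G$. If $f\in K(t^H,\beta)_\delta$ is nonzero, then $f$ has a multiplicative inverse in $K(t^H,\beta)_\delta$.
   Context: $G$ is an ordered abelian group, $A$ its smallest nonzero convex subgroup, $H=G/A$ with the induced order, $\rho:G\to H$ the projection; $\alpha:H\to G$ is a transversal ($\rho\alpha=\mathrm{id}_H$, $\alpha(0)=0$) and $\beta(h,h')=\alpha(h+h')-\alpha(h)-\alpha(h')\in A$. $\sigma:A\to K^\times$ is a cross-section (homomorphism with $v(\sigma(a))=a$). $\delta$ is an infinite cardinal and $K(t^H,\beta)_\delta$ is the set of formal sums $\sum_{h\in S}a_ht^h$ with $S\subseteq H$ well ordered, $|S|\le\delta$, $a_h\in K$, with coefficientwise addition and multiplication $\left(\sum a_ht^h\right)\left(\sum b_ht^h\right)=\sum_l\left(\sum_{h+h'=l}a_hb_{h'}\sigma(-\beta(h,h'))\right)t^l$. A sequence $(c_n)_{n<\omega}$ in a valued field is pseudo-Cauchy if for some $n_0$, $v(c_l-c_m)>v(c_m-c_n)$ whenever $n_0<n<m<l$; $c$ is a pseudo-limit if $v(c-c_n)=v(c_{n+1}-c_n)$ for all large $n$; $\omega$-pseudo complete means every pseudo-Cauchy sequence indexed by $\omega$ has a pseudo-limit. *)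

From mathcomp Require Import all_boot all_order all_algebra.
Set Implicit Arguments. Unset Strict Implicit. Unset Printing Implicit Defensive.
Import GRing.Theory.
Local Open Scope ring_scope.

Section Defs.

Variable G : zmodType.
Variable le : G -> G -> Prop.

Definition ordered_abelian_group : Prop :=
  [/\ (forall x, le x x),
      (forall x y, le x y -> le y x -> x = y),
      (forall x y z, le x y -> le y z -> le x z),
      (forall x y, le x y \/ le y x)
    & (forall x y z, le x y -> le (x + z) (y + z))].

Definition ltG (x y : G) : Prop := le x y /\ x <> y.

Definition subgroup (B : G -> Prop) : Prop :=
  B 0 /\ (forall x y, B x -> B y -> B (x - y)).

Definition convex (B : G -> Prop) : Prop :=
  forall a b x, B a -> B b -> le a x -> le x b -> B x.

Definition convex_subgroup (B : G -> Prop) : Prop := subgroup B /\ convex B.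

Definition nonzero_set (B : G -> Prop) : Prop := exists a, B a /\ a <> 0.

Definition smallest_nonzero_convex_subgroup (A : G -> Prop) : Prop :=
  [/\ convex_subgroup A, nonzero_set A &
      forall B, convex_subgroup B -> nonzero_set B -> forall x, A x -> B x].

Variable H : zmodType.
Variable rho : G -> H.

(* H is the quotient G/A with projection rho: rho is a surjective group
   homomorphism with kernel exactly A. *)
Definition quotient_projection (A : G -> Prop) : Prop :=
  [/\ (forall x y, rho (x + y) = rho x + rho y),
      (forall h, exists g, rho g = h)
    & (forall g, rho g = 0 <-> A g)].

Definition leH (h h' : H) : Prop :=
  exists g g', [/\ rho g = h, rho g' = h' & le g g'].

Variable alpha : H -> G.

Definition transversal : Prop := (forall h, rho (alpha h) = h) /\ alpha 0 = 0.

Definition beta (h h' : H) : G := alpha (h + h') - alpha h - alpha h'.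

Variable K : fieldType.
Variable v : K -> G.   (* the value of v at 0 is irrelevant: v(0) = infinity *)

Definition valuation_onto (A : G -> Prop) : Prop :=
  [/\ (forall x y, x != 0 -> y != 0 -> v (x * y) = v x + v y),
      (forall x y, x != 0 -> y != 0 -> x + y != 0 ->
          le (v x) (v (x + y)) \/ le (v y) (v (x + y))),
      (forall x, x != 0 -> A (v x))
    & (forall a, A a -> exists x, x != 0 /\ v x = a)].

(* comparisons of values in G ∪ {infinity}, with v(0) = infinity *)
Definition vlt (x y : K) : Prop := x != 0 /\ (y = 0 \/ ltG (v x) (v y)).
Definition veq (x y : K) : Prop :=
  (x = 0 /\ y = 0) \/ [/\ x != 0, y != 0 & v x = v y].

Definition pseudo_cauchy (c : nat -> K) : Prop :=
  exists n0 : nat, forall n m l : nat, (n0 < n)%N -> (n < m)%N -> (m < l)%N ->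
    vlt (c m - c n) (c l - c m).

Definition pseudo_limit (c : nat -> K) (x : K) : Prop :=
  exists N : nat, forall n : nat, (N <= n)%N -> veq (x - c n) (c n.+1 - c n).

Definition omega_pseudo_complete : Prop :=
  forall c : nat -> K, pseudo_cauchy c -> exists x, pseudo_limit c x.

Definition char0 : Prop := forall n : nat, (n%:R : K) = 0 -> n = 0%N.

(* the residue field O_v / m_v has characteristic p: the kernel of
   Z -> O_v/m_v is pZ *)
Definition residue_char (p : nat) : Prop :=
  forall n : nat, ((n%:R : K) = 0 \/ ltG 0 (v n%:R)) <-> (p %| n)%N.

Variable sigma : G -> K.

Definition cross_section (A : G -> Prop) : Prop :=
  [/\ (forall a b, A a -> A b -> sigma (a + b) = sigma a * sigma b),
      (forall a, A a -> sigma a != 0)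
    & (forall a, A a -> v (sigma a) = a)].

(* a formal sum sum_h f_h t^h is represented by its coefficient function
   f : H -> K; its support is {h | f h != 0}. The cardinal delta is
   represented by a type D. *)
Variable D : Type.

Definition infinite_cardinal : Prop :=
  exists e : nat -> D, forall m n, e m = e n -> m = n.

Definition support_well_ordered (f : H -> K) : Prop :=
  forall P : H -> Prop, (exists h, P h /\ f h != 0) ->
    exists h0, [/\ P h0, f h0 != 0 &
                   forall h, P h -> f h != 0 -> leH h0 h].

Definition support_card_le_delta (f : H -> K) : Prop :=
  exists i : H -> D, forall h h', f h != 0 -> f h' != 0 -> i h = i h' -> h = h'.

Definition in_series_ring (f : H -> K) : Prop :=
  support_well_ordered f /\ support_card_le_delta f.

(* c is the coefficient at t^l of the product f * g, i.e.
   c = sum_{h + h' = l} f_h g_h' sigma(-beta(h,h')), the sum ranging over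
   the (finitely many) h with f_h != 0 and g_(l-h) != 0. *)
Definition prod_coef (f g : H -> K) (l : H) (c : K) : Prop :=
  exists s : seq H,
    [/\ uniq s,
        (forall h, h \in s <-> (f h != 0 /\ g (l - h) != 0))
      & c = \sum_(h <- s) f h * g (l - h) * sigma (- beta h (l - h))].

Definition one_series (l : H) : K := if l == 0 then 1 else 0.

Definition is_inverse (f g : H -> K) : Prop :=
  (forall l, prod_coef f g l (one_series l)) /\
  (forall l, prod_coef g f l (one_series l)).

End Defs.

From mathcomp Require Import all_boot all_order all_algebra.
From mathcomp Require Import boolp classical_sets functions.
Set Implicit Arguments. Unset Strict Implicit. Unset Printing Implicit Defensive.
Import GRing.Theory.
Local Open Scope classical_set_scope.
Local Open Scope ring_scope.

(* Let h0 be the least element of supp f and S = (supp f - h0) \ {0}, a well-ordered set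
   of positive elements of H.  By Neumann's lemma (proved with Nash-Williams' minimal bad
   sequence argument) the finite sums of elements of S form a well-ordered set M, so all
   antidiagonals {h in M - h0 | l - h in supp f} are finite and the coefficients of the
   inverse g can be defined by well-founded recursion on M - h0: the coefficient of
   t^(m + h0) in g f = 1 is solved for g_m, using that f_h0 and the twisting factors
   sigma(-beta) are nonzero.  Every element of supp g is coded by a word over supp f, and
   words over an infinite D inject into D because D * D does; the latter follows from
   Zorn's lemma applied to partial self-pairings D' * D' -> D'. *)

(** * Cardinal arithmetic *)

Lemma chain_bigcup2 (T : Type) (F : set (set T)) a b :
  total_on F subset -> (\bigcup_(X in F) X) a -> (\bigcup_(X in F) X) b ->
  exists2 X, F X & X a /\ X b.
Proof.
move=> Ftot [X FX Xa] [Y FY Yb].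
have [XY|YX] := Ftot X Y FX FY; first by exists Y => //; split=> //; apply: XY.
by exists X => //; split=> //; apply: YX.
Qed.

Section Graphs.
Variables (X Y : Type).
Implicit Types (G : set (X * Y)) (A : set X) (B : set Y).

Definition functional_graph G := forall x y y', G (x, y) -> G (x, y') -> y = y'.
Definition injective_graph G := forall x x' y, G (x, y) -> G (x', y) -> x = x'.

Lemma graph_embedding (y0 : Y) A B G :
    G `<=` A `*` B -> injective_graph G -> (forall x, A x -> exists y, G (x, y)) ->
  exists j, [/\ set_fun A B j, set_inj A j & forall x, A x -> G (x, j x)].
Proof.
move=> GAB Ginj Gtot.
have [j Gj] : {j & forall x, A x -> G (x, j x)}.
  apply: (@choice _ _ (fun x y => A x -> G (x, y))) => x.
  by have [/Gtot [y Gxy]|nAx] := EM (A x); [exists y | exists y0].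
exists j; split=> // [x /Gj /GAB [] //|x x' /set_mem Ax /set_mem Ax' jx].
by apply: (Ginj _ _ (j x)); [apply: Gj | rewrite jx; apply: Gj].
Qed.

End Graphs.

Definition transpose_graph (X Y : Type) (G : set (X * Y)) : set (Y * X) :=
  [set p | G (p.2, p.1)].

Lemma card_le_total (T U : Type) (x0 : T) (y0 : U) (A : set T) (B : set U) :
  (exists j, set_fun A B j /\ set_inj A j) \/ (exists k, set_fun B A k /\ set_inj B k).
Proof.
pose partial_inj G := [/\ G `<=` A `*` B, functional_graph G & injective_graph G].
have [G [[GAB Gfun Ginj] Gmax]] :
    exists G, partial_inj G /\ forall G', G `<` G' -> ~ partial_inj G'.
  apply: Zorn_bigcup => F FP Ftot; split.
  - by move=> p [G /FP [GAB _ _] /GAB].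
  - move=> x y y' Gy Gy'; have [G /FP [_ Gfun _] [] ] := chain_bigcup2 Ftot Gy Gy'.
    exact: Gfun.
  - move=> x x' y Gx Gx'; have [G /FP [_ _ Ginj] [] ] := chain_bigcup2 Ftot Gx Gx'.
    exact: Ginj.
have [Adom|/existsNP [x1 /not_implyP [Ax1 x1free]]] :=
  pselect (forall x, A x -> exists y, G (x, y)).
  have [j [jAB jinj _]] := graph_embedding y0 GAB Ginj Adom.
  by left; exists j.
have [Bdom|/existsNP [y1 /not_implyP [By1 y1free]]] :=
  pselect (forall y, B y -> exists x, G (x, y)).
  have GBA : transpose_graph G `<=` B `*` A by move=> [y x] /GAB [].
  have GTinj : injective_graph (transpose_graph G) by move=> y y' x; apply: Gfun.
  have [k [kBA kinj _]] := graph_embedding x0 GBA GTinj Bdom.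
  by right; exists k.
exfalso; apply: (Gmax (G `|` [set (x1, y1)])).
  split; first exact: subsetUl.
  by move=> /(_ (x1, y1) (or_intror erefl)) Gx1; apply: x1free; exists y1.
split.
- by move=> p [/GAB //|->].
- move=> x y y' [Gy|[Ex Ey]] [Gy'|[Ex' Ey']]; rewrite ?Ey ?Ey' //.
  + exact: Gfun Gy Gy'.
  + by case: x1free; exists y; rewrite -Ex'.
  + by case: x1free; exists y'; rewrite -Ex.
- move=> x x' y [Gx|[Ex Ey]] [Gx'|[Ex' Ey']]; rewrite ?Ex ?Ex' //.
  + exact: Ginj Gx Gx'.
  + by case: y1free; exists x; rewrite -Ey'.
  + by case: y1free; exists x'; rewrite -Ey.
Qed.

Lemma Zorn_bigcup_above (T : Type) (P : set (set T)) (A0 : set T) :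
    P A0 ->
    (forall F, F `<=` P -> total_on F subset -> F !=set0 -> P (\bigcup_(X in F) X)) ->
  exists A, [/\ A0 `<=` A, P A & forall B, A `<=` B -> P B -> B `<=` A].
Proof.
move=> PA0 Pchain; pose Q := {A | P A /\ A0 `<=` A}.
pose R (a b : Q) := `[< sval a `<=` sval b >].
have [[A [PA A0A]] Amax] : exists A : Q, premaximal R A.
  apply: (ZL_preorder (exist _ A0 (conj PA0 (@subset_refl _ A0)))).
  - by move=> ?; apply/asboolP.
  - move=> a b c /asboolP ab /asboolP bc; apply/asboolP; exact: subset_trans bc.
  move=> F Ftot; have [[X FX]|F0] := pselect (exists X, F X); last first.
    by exists (exist _ A0 (conj PA0 (@subset_refl _ A0))) => X FX; case: F0; exists X.
  pose F' := sval @` F.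
  have F'tot : total_on F' subset.
    move=> _ _ [a Fa <-] [b Fb <-].
    by have [/asboolP|/asboolP] := Ftot a b Fa Fb; [left|right].
  have PU : P (\bigcup_(Y in F') Y).
    by apply: Pchain => //; [move=> _ [a _ <-]; case: (svalP a) | exists (sval X), X].
  have A0U : A0 `<=` \bigcup_(Y in F') Y.
    by move=> x /(proj2 (svalP X)) Xx; exists (sval X) => //; exists X.
  exists (exist (fun A => P A /\ A0 `<=` A) _ (conj PU A0U)) => a Fa; apply/asboolP.
  by move=> x ax; exists (sval a) => //; exists a.
exists A; split=> // B AB PB.
have AB' : R (exist _ A (conj PA A0A)) (exist _ B (conj PB (subset_trans A0A AB))).
  exact/asboolP.
by have /asboolP := Amax _ AB'.
Qed.

Section Pairing.
Variables (T : Type) (e : nat -> T).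
Hypothesis e_inj : injective e.

Definition pairing_on (B : set T) (f : T * T -> T) :=
  [/\ range e `<=` B, set_fun (B `*` B) B f & set_inj (B `*` B) f].

Lemma pairing_on_range : exists f, pairing_on (range e) f.
Proof.
pose einv := 'pinv_(fun=> 0%N) setT e.
have einvK n : einv (e n) = n.
  by apply: (pinvKV _ (in2W e_inj)); rewrite in_setE.
exists (fun p => e (pickle (einv p.1, einv p.2))); split => //.
move=> [x y] [x' y']; rewrite !in_setE.
move=> -[/= [n _ <-] [m _ <-]] [[n' _ <-] [m' _ <-]] /=.
by rewrite !einvK => /e_inj /(pcan_inj (@pickleK _)) [-> ->].
Qed.

Definition carrier (G : set ((T * T) * T)) := [set x | exists z, G ((x, x), z)].

Definition pairing_graph (G : set ((T * T) * T)) :=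
  [/\ G `<=` (carrier G `*` carrier G) `*` carrier G,
      (forall p, (carrier G `*` carrier G) p -> exists z, G (p, z)),
      functional_graph G & injective_graph G].

Definition fun_graph (B : set T) (f : T * T -> T) : set ((T * T) * T) :=
  [set pz | (B `*` B) pz.1 /\ pz.2 = f pz.1].

Lemma carrier_fun_graph B f : set_fun (B `*` B) B f -> carrier (fun_graph B f) = B.
Proof.
move=> fB; apply/seteqP; split=> [x [z [[Bx _] _]] //|x Bx].
by exists (f (x, x)).
Qed.

Lemma pairing_graph_fun_graph B f :
  set_fun (B `*` B) B f -> set_inj (B `*` B) f -> pairing_graph (fun_graph B f).
Proof.
move=> fB finj; rewrite /pairing_graph carrier_fun_graph //; split.
- by move=> [p z] [Bp /= ->]; split=> //; apply: fB.
- by move=> p Bp; exists (f p).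
- by move=> p z z' [_ /= ->] [_ /= ->].
- by move=> p p' z [Bp /= ->] [Bp' /= E]; apply: (finj p p') => //; rewrite in_setE.
Qed.

Lemma pairing_graph_bigcup F : F `<=` pairing_graph -> total_on F subset ->
  pairing_graph (\bigcup_(G in F) G).
Proof.
move=> FP Ftot.
have carrierU x : carrier (\bigcup_(G in F) G) x <-> exists2 G, F G & carrier G x.
  split=> [[z [G FG Gz]]|[G FG [z Gz]]]; first by exists G => //; exists z.
  by exists z; exists G.
split.
- move=> [p z] [G FG Gpz]; have [Gsub _ _ _] := FP G FG.
  have [[Bx By] Bz] := Gsub _ Gpz.
  by split; [split|]; apply/carrierU; exists G.
- move=> [x y] [/= /carrierU [G FG [zx Gx]] /carrierU [G' FG' [zy Gy]]].
  have [X FX [Xx Xy]] : exists2 X, F X & X ((x, x), zx) /\ X ((y, y), zy).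
    by apply: chain_bigcup2 => //; [exists G|exists G'].
  have [_ Xtot _ _] := FP X FX.
  have [z Xz] : exists z, X ((x, y), z) by apply: Xtot; split; [exists zx|exists zy].
  by exists z; exists X.
- move=> p z z' Gz Gz'; have [X FX [Xz Xz']] := chain_bigcup2 Ftot Gz Gz'.
  by have [_ _ Xfun _] := FP X FX; apply: Xfun Xz Xz'.
- move=> p p' z Gp Gp'; have [X FX [Xp Xp']] := chain_bigcup2 Ftot Gp Gp'.
  by have [_ _ _ Xinj] := FP X FX; apply: Xinj Xp Xp'.
Qed.

Lemma maximal_pairing : exists B f, pairing_on B f /\
  forall B' f', pairing_on B' f' -> B `<=` B' -> {in B `*` B, f' =1 f} -> B' `<=` B.
Proof.
have [f0 [_ f0B f0inj]] := pairing_on_range.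
have [G [G0G [Gsub Gtot Gfun Ginj] Gmax]] :=
  Zorn_bigcup_above (pairing_graph_fun_graph f0B f0inj)
    (fun F FP Ftot _ => pairing_graph_bigcup FP Ftot).
have [f [fB finj Gf]] := graph_embedding (e 0) Gsub Ginj Gtot.
exists (carrier G), f; split.
  split=> // _ [n _ <-]; exists (f0 (e n, e n)); apply: G0G.
  by split=> //; split; exists n.
move=> B' f' [_ f'B f'inj] BB' f'f x B'x.
have GG' : G `<=` fun_graph B' f'.
  move=> [p z] Gpz; have [[Bp1 Bp2] _] := Gsub _ Gpz.
  split; first by split; apply: BB'.
  by rewrite /= f'f ?in_setE //; apply: Gfun Gpz (Gf p _).
have Gx : G ((x, x), f' (x, x)) by apply: (Gmax _ GG' (pairing_graph_fun_graph f'B f'inj)).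
by exists (f' (x, x)).
Qed.

Lemma pairing_absorbs B C f k : pairing_on B f -> set_fun C B k -> set_inj C k ->
  exists i, set_fun (B `|` C) B i /\ set_inj (B `|` C) i.
Proof.
move=> [eB fB finj] kB kinj.
have Be n : B (e n) by apply: eB; exists n.
have fE a b a' b' : B a -> B b -> B a' -> B b' -> f (a, b) = f (a', b') -> a = a' /\ b = b'.
  move=> Ba Bb Ba' Bb' E.
  by have [-> ->] : (a, b) = (a', b') by apply: finj E; rewrite in_setE.
exists (fun x => if `[< B x >] then f (e 0, x) else f (e 1, k x)); split.
  move=> x BCx; case: asboolP => Bx; apply: fB; split=> //=.
  by case: BCx => // Cx; apply: kB.
move=> x y; rewrite !in_setE => BCx BCy.
have kB' z : (B `|` C) z -> ~ B z -> B (k z) by move=> [//|/kB].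
case: asboolP => Bx; case: asboolP => By E.
- by case: (fE _ _ _ _ (Be 0%N) Bx (Be 0%N) By E).
- by case: (fE _ _ _ _ (Be 0%N) Bx (Be 1%N) (kB' _ BCy By) E) => /e_inj.
- by case: (fE _ _ _ _ (Be 1%N) (kB' _ BCx Bx) (Be 0%N) By E) => /e_inj.
have [_ kE] := fE _ _ _ _ (Be 1%N) (kB' _ BCx Bx) (Be 1%N) (kB' _ BCy By) E.
by apply: kinj kE; rewrite in_setE; [case: BCx | case: BCy].
Qed.

Lemma pairing_extend B f j : pairing_on B f -> set_fun B (~` B) j -> set_inj B j ->
  exists f', pairing_on (B `|` j @` B) f' /\ {in B `*` B, f' =1 f}.
Proof.
move=> fpair jB jinj.
have [kC kinj _] := injpinv_bij (fun=> e 0) jinj.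
have [i [iB iinj]] := pairing_absorbs fpair kC kinj.
case: fpair => eB fB finj.
exists (fun p => if `[< (B `*` B) p >] then f p else j (f (i p.1, i p.2))).
split; last by move=> p /set_mem Bp; rewrite asboolT.
have fiB p : (B `|` j @` B) p.1 -> (B `|` j @` B) p.2 -> B (f (i p.1, i p.2)).
  by move=> BCx BCy; apply: fB; split; apply: iB.
split.
- exact: subset_trans eB (@subsetUl _ _ _).
- move=> p [BCx BCy]; case: asboolP => Bp; first by left; apply: fB.
  by right; exists (f (i p.1, i p.2)) => //; apply: fiB.
move=> p q; rewrite !in_setE => -[BCp1 BCp2] [BCq1 BCq2].
case: asboolP => Bp; case: asboolP => Bq.
- by apply: finj; rewrite in_setE.
- by move=> E; exfalso; apply: (jB _ (fiB q BCq1 BCq2)); rewrite -E; apply: fB.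
- by move=> E; exfalso; apply: (jB _ (fiB p BCp1 BCp2)); rewrite E; apply: fB.
move=> E.
have jE : f (i p.1, i p.2) = f (i q.1, i q.2) by apply: jinj E; rewrite in_setE; apply: fiB.
have [E1 E2] : (i p.1, i p.2) = (i q.1, i q.2).
  by apply: finj jE; rewrite in_setE; split; apply: iB.
case: p q {Bp Bq E jE} BCp1 BCp2 BCq1 BCq2 E1 E2 => [x y] [x' y'] /=.
move=> BCx BCy BCx' BCy' E1 E2.
have -> : x = x' by apply: iinj E1; rewrite in_setE.
by have -> : y = y' by apply: iinj E2; rewrite in_setE.
Qed.

Lemma pairing : exists pi : T * T -> T, injective pi.
Proof.
(* A maximal pairing on B leaves no room to embed B into its complement, so the
   complement, and then all of T, embeds into B. *)
have [B [f [fpair Bmax]]] := maximal_pairing.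
have [[j [jB jinj]]|[k [kB kinj]]] := card_le_total (e 0) (e 0) B (~` B).
  have [f' [f'pair f'f]] := pairing_extend fpair jB jinj.
  have Be0 : B (e 0) by case: fpair => eB _ _; apply: eB; exists 0%N.
  have : (B `|` j @` B) (j (e 0)) by right; exists (e 0).
  by move/(Bmax _ _ f'pair (@subsetUl _ _ _) f'f)/(jB _ Be0).
have [i [iB iinj]] := pairing_absorbs fpair kB kinj.
have BC z : (B `|` ~` B) z by rewrite setUv.
case: fpair => _ fB finj.
exists (fun p => f (i p.1, i p.2)) => -[x y] [x' y'] /= E.
have [E1 E2] : (i x, i y) = (i x', i y').
  by apply: finj E; rewrite in_setE; split; apply: iB.
have -> : x = x' by apply: iinj E1; rewrite in_setE.
by have -> : y = y' by apply: iinj E2; rewrite in_setE.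
Qed.

Lemma seq_code : exists c : seq T -> T, injective c.
Proof.
have [pi pi_inj] := pairing.
pose fix code (s : seq T) := if s is x :: s' then pi (x, code s') else e 0.
exists (fun s => pi (e (size s), code s)) => s t /pi_inj [/e_inj].
elim: s t => [|x s IH] [|y t] //= [Est] /pi_inj [-> /(IH _ Est) ->] //.
Qed.

End Pairing.

(** * Well-ordered subsets of an ordered abelian group *)

Lemma injective_seq_of_not_enumerable (T : eqType) (F : set T) :
    ~ (exists s, uniq s /\ forall x, x \in s <-> F x) ->
  exists u : nat -> T, injective u /\ forall n, F (u n).
Proof.
move=> nenum.
have fresh (s : seq T) : (forall y, y \in s -> F y) -> exists x, F x /\ x \notin s.
  move=> sF; apply: contrapT => nx; apply: nenum; exists (undup s).
  split=> [|x]; first exact: undup_uniq.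
  rewrite mem_undup; split=> [/sF //|Fx]; apply: contrapT => /negP xs.
  by apply: nx; exists x.
have [x0 _] : exists x, F x /\ x \notin [::] by apply: fresh.
have [nxt nxtP] : {nxt : seq T -> T &
    forall s, (forall y, y \in s -> F y) -> F (nxt s) /\ nxt s \notin s}.
  apply: (@choice _ _ (fun s x => (forall y, y \in s -> F y) -> F x /\ x \notin s)) => s.
  have [/fresh [x Px]|nsF] := EM (forall y, y \in s -> F y); first by exists x.
  by exists x0.
pose fix pre n := if n is n'.+1 then nxt (pre n') :: pre n' else [::].
have preF n y : y \in pre n -> F y.
  elim: n y => [//|n IH] y; rewrite in_cons => /predU1P [->|/IH //].
  by have [] := nxtP _ IH.
have in_pre m n : (m < n)%N -> nxt (pre m) \in pre n.
  elim: n => [//|n IH]; rewrite ltnS leq_eqVlt in_cons => /predU1P [->|/IH ->];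
    by rewrite ?eqxx ?orbT.
exists (fun n => nxt (pre n)); split=> [m n E|n]; last by have [] := nxtP _ (preF n).
have fresh_at k : nxt (pre k) \notin pre k by have [] := nxtP _ (preF k).
case: (ltngtP m n) => // [mn|nm].
  by have := fresh_at n; rewrite -E in_pre.
by have := fresh_at m; rewrite E in_pre.
Qed.

Section MinimalPairwise.
Variables (W : Type) (weight : W -> nat) (Q : W -> W -> Prop).

Definition pairwise_fun (u : nat -> W) := forall i j, (i < j)%N -> Q (u i) (u j).

Lemma minimal_pairwise_fun : (exists u, pairwise_fun u) ->
  exists m, pairwise_fun m /\ forall n v, pairwise_fun v ->
    (forall i, (i < n)%N -> v i = m i) -> (weight (m n) <= weight (v n))%N.
Proof.
move=> [u0 u0Q]; pose w0 := u0 0%N.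
pose ext (p : seq W) :=
  exists2 u, pairwise_fun u & forall i, (i < size p)%N -> u i = nth w0 p i.
have ext_rcons p u : pairwise_fun u -> (forall i, (i < size p)%N -> u i = nth w0 p i) ->
    ext (rcons p (u (size p))).
  move=> uQ up; exists u => // i; rewrite size_rcons ltnS leq_eqVlt nth_rcons.
  by case/predU1P => [->|ip]; rewrite ?ltnn ?eqxx // ip up.
have [nxt nxtP] : {nxt : seq W -> W & forall p, ext p ->
    ext (rcons p (nxt p)) /\ forall w, ext (rcons p w) -> (weight (nxt p) <= weight w)%N}.
  apply: (@choice _ _ (fun p x => ext p -> ext (rcons p x) /\
    forall w, ext (rcons p w) -> (weight x <= weight w)%N)) => p.
  have [[u uQ up]|np] := EM (ext p); last by exists w0.
  have exn : exists n, `[< exists2 w, ext (rcons p w) & weight w = n >].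
    exists (weight (u (size p))); apply/asboolP.
    by exists (u (size p)) => //; apply: ext_rcons.
  case: (ex_minnP exn) => n /asboolP [w pw <-] wmin; exists w => _; split=> // w' pw'.
  by apply: wmin; apply/asboolP; exists w'.
pose fix pre n := if n is n'.+1 then rcons (pre n') (nxt (pre n')) else [::].
have size_pre n : size (pre n) = n by elim: n => //= n IH; rewrite size_rcons IH.
have ext_pre n : ext (pre n) by elim: n => [|n IH]; [exists u0 | case: (nxtP _ IH)].
have nth_pre n i : (i < n)%N -> nth w0 (pre n) i = nxt (pre i).
  elim: n => // n IH; rewrite ltnS /= nth_rcons size_pre leq_eqVlt.
  by case/predU1P => [->|iv]; rewrite ?ltnn ?eqxx // iv IH.
exists (fun n => nxt (pre n)); split.
  move=> i j ij; have [v vQ vpre] := ext_pre j.+1.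
  rewrite -(nth_pre j.+1 i) ?(ltn_trans ij) // -(nth_pre j.+1 j) //.
  rewrite -!vpre ?size_pre ?(ltn_trans ij) //.
  exact: vQ.
move=> n v vQ vm; apply: (nxtP _ (ext_pre n)).2.
rewrite -{2}(size_pre n); apply: ext_rcons => // i; rewrite size_pre => i_n.
by rewrite vm // nth_pre.
Qed.

End MinimalPairwise.

Section OrderedGroup.
Variables (H : zmodType) (le : H -> H -> Prop).
Hypothesis ordH : ordered_abelian_group le.
Local Notation lt := (ltG le).

Lemma oag_refl x : le x x. Proof. by case: ordH. Qed.

Lemma oag_anti x y : le x y -> le y x -> x = y.
Proof. by case: ordH => _ anti _ _ _; apply: anti. Qed.

Lemma oag_trans y x z : le x y -> le y z -> le x z.
Proof. by case: ordH => _ _ trans _ _; apply: trans. Qed.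

Lemma oag_total x y : le x y \/ le y x. Proof. by case: ordH. Qed.

Lemma oag_addr z x y : le x y -> le (x + z) (y + z).
Proof. by case: ordH => _ _ _ _; apply. Qed.

Lemma oag_addl z x y : le x y -> le (z + x) (z + y).
Proof. by rewrite ![z + _]addrC; apply: oag_addr. Qed.

Lemma oag_addr_cancel z x y : le (x + z) (y + z) -> le x y.
Proof. by move=> /(oag_addr (- z)); rewrite !addrK. Qed.

Lemma oag_opp x y : le x y -> le (- y) (- x).
Proof. by move=> /(oag_addr (- x - y)); rewrite addrA subrr add0r addrCA subrr addr0. Qed.

Lemma oag_lt_le_trans y x z : lt x y -> le y z -> lt x z.
Proof.
move=> [xy nxy] yz; split; first exact: oag_trans yz.
by move=> exz; apply: nxy; apply: oag_anti => //; rewrite exz.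
Qed.

Lemma oag_le_lt_trans y x z : le x y -> lt y z -> lt x z.
Proof.
move=> xy [yz nyz]; split; first exact: oag_trans yz.
by move=> exz; apply: nyz; apply: oag_anti => //; rewrite -exz.
Qed.

Lemma oag_lt_trans y x z : lt x y -> lt y z -> lt x z.
Proof. by move=> xy [yz _]; apply: oag_lt_le_trans yz. Qed.

Lemma oag_lt_addr z x y : lt x y -> lt (x + z) (y + z).
Proof. by move=> [xy nxy]; split; [apply: oag_addr | move/addIr]. Qed.

Lemma oag_lt_le_sub x y a b : lt x y -> le a b -> lt (x - b) (y - a).
Proof.
move=> xy ab; apply: (@oag_le_lt_trans (x - a)); last exact: oag_lt_addr.
by apply: oag_addl; apply: oag_opp.
Qed.

Definition well_ordered (X : set H) := forall P : set H, (exists h, P h /\ X h) ->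
  exists h0, [/\ P h0, X h0 & forall h, P h -> X h -> le h0 h].

Lemma well_ordered_sub X Y : X `<=` Y -> well_ordered Y -> well_ordered X.
Proof.
move=> XY wY P [h [Ph Xh]].
have [h0 [[Ph0 Xh0] _ h0min]] :=
  wY [set h | P h /\ X h] (ex_intro _ h (conj (conj Ph Xh) (XY _ Xh))).
by exists h0; split=> // h' Ph' Xh'; apply: h0min => //; apply: XY.
Qed.

Lemma well_ordered_shift X c : well_ordered X -> well_ordered [set h | X (h + c)].
Proof.
move=> wX P [h [Ph Xh]].
have Phc : P (h + c - c) by rewrite addrK.
have [y0 [Py0 Xy0 y0min]] :=
  wX [set y | P (y - c)] (ex_intro _ (h + c) (conj Phc Xh)).
exists (y0 - c); split=> //=; first by rewrite subrK.
move=> h' Ph' Xh'; apply: (@oag_addr_cancel c); rewrite subrK.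
by apply: y0min; rewrite //= addrK.
Qed.

Lemma well_ordered_monotone_subseq X (u : nat -> H) :
    well_ordered X -> (forall n, X (u n)) ->
  exists phi : nat -> nat, {homo phi : m n / (m < n)%N} /\
    forall m n, (m <= n)%N -> le (u (phi m)) (u (phi n)).
Proof.
move=> wX Xu.
have least k : exists j, (k <= j)%N /\ forall j', (k <= j')%N -> le (u j) (u j').
  have [_ [[j kj <-] _ jmin]] := wX [set h | exists2 j, (k <= j)%N & u j = h]
    (ex_intro _ (u k) (conj (ex_intro2 _ _ k (leqnn k) erefl) (Xu k))).
  by exists j; split=> // j' kj'; apply: jmin => //; exists j'.
have [psi psiP] := choice least.
pose fix phi n := if n is n'.+1 then psi (phi n').+1 else psi 0%N.
have phiS n : (phi n < phi n.+1)%N by case: (psiP (phi n).+1).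
exists phi; split; first exact: homo_ltn ltn_trans phiS.
apply: homo_leq oag_refl (fun y x z => @oag_trans y x z) _ => n.
have [_ least_n] := psiP (if n is n'.+1 then (phi n').+1 else 0%N).
case: n least_n => [|n] least_n; apply: least_n => //.
exact: leq_trans (phiS n) (ltnW (phiS n.+1)).
Qed.

Lemma well_ordered_antidiagonal X Y l : well_ordered X -> well_ordered Y ->
  exists s, uniq s /\ forall h, h \in s <-> X h /\ Y (l - h).
Proof.
move=> wX wY; apply: contrapT => /injective_seq_of_not_enumerable [u [u_inj uXY]].
have [phi [phi_lt phi_le]] := well_ordered_monotone_subseq wX (fun n => (uXY n).1).
have [psi [psi_lt psi_le]] :=
  well_ordered_monotone_subseq (u := fun n => l - u (phi n)) wY
    (fun n => (uXY (phi n)).2).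
have psi01 : (psi 0 < psi 1)%N by apply: psi_lt.
have up : le (u (phi (psi 0%N))) (u (phi (psi 1%N))) by apply: phi_le; apply: ltnW.
have /oag_opp : le (l - u (phi (psi 0%N))) (l - u (phi (psi 1%N))) by apply: psi_le.
rewrite !opprB => /(oag_addr l); rewrite !subrK => down.
by have := phi_lt _ _ psi01; rewrite (u_inj _ _ (oag_anti up down)) ltnn.
Qed.

Lemma well_ordered_wf X : well_ordered X -> well_founded (fun a b => X a /\ lt a b).
Proof.
move=> wX; have accX y : X y -> Acc (fun a b => X a /\ lt a b) y.
  move=> Xy; apply: contrapT => nacc.
  have [y0 [nacc0 Xy0 y0min]] := wX [set y | ~ Acc (fun a b => X a /\ lt a b) y]
    (ex_intro _ y (conj nacc Xy)).
  apply: nacc0; constructor => z [Xz [zy0 nzy0]]; apply: contrapT => naccz.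
  by apply: nzy0; apply: oag_anti => //; apply: y0min.
by move=> x; constructor => z [Xz _]; apply: accX.
Qed.

Lemma well_ordered_descending X :
    (forall u : nat -> H, (forall n, X (u n)) -> ~ forall n, lt (u n.+1) (u n)) ->
  well_ordered X.
Proof.
move=> nodesc P [h [Ph Xh]]; apply: contrapT => nomin.
have smaller x : P x /\ X x -> exists y, (P y /\ X y) /\ lt y x.
  move=> [Px Xx]; apply: contrapT => nsmaller; apply: nomin.
  exists x; split=> // y Py Xy; have [//|yx] := oag_total x y.
  apply: contrapT => nxy; apply: nsmaller; exists y; split=> //; split=> // yx'.
  by apply: nxy; rewrite yx'; apply: oag_refl.
have [nxt nxtP] : {nxt : H -> H &
    forall x, P x /\ X x -> (P (nxt x) /\ X (nxt x)) /\ lt (nxt x) x}.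
  apply: (@choice _ _ (fun x y => P x /\ X x -> (P y /\ X y) /\ lt y x)) => x.
  have [/smaller [y Py]|nPXx] := EM (P x /\ X x); first by exists y.
  by exists x.
pose u n := iter n nxt h.
have PXu n : P (u n) /\ X (u n).
  by elim: n => [|n IH]; [split | rewrite /u iterS; case: (nxtP _ IH)].
apply: (nodesc u) => [n|n]; first by case: (PXu n).
by rewrite /u iterS; case: (nxtP _ (PXu n)).
Qed.

Definition finite_sums (S : set H) : set H :=
  [set x | exists2 w : seq H, (forall y, y \in w -> S y) & x = \sum_(y <- w) y].

Lemma oag_sum_ge0 (w : seq H) : (forall y, y \in w -> le 0 y) -> le 0 (\sum_(y <- w) y).
Proof.
elim: w => [|a w IH] w_ge0; first by rewrite big_nil; apply: oag_refl.
rewrite big_cons; apply: (@oag_trans a); first by apply: w_ge0; rewrite mem_head.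
rewrite -{1}[a]addr0; apply: oag_addl; apply: IH => y yw.
by apply: w_ge0; rewrite in_cons yw orbT.
Qed.

Lemma finite_sums0 S : finite_sums S 0.
Proof. by exists [::]; rewrite ?big_nil. Qed.

Lemma finite_sumsD S x s : finite_sums S x -> S s -> finite_sums S (x + s).
Proof.
move=> [w wS ->] Ss; exists (s :: w); last by rewrite big_cons addrC.
by move=> y; rewrite in_cons => /predU1P [->|/wS].
Qed.

Section Neumann.
Variable S : set H.
Hypotheses (wS : well_ordered S) (S_ge0 : forall s, S s -> le 0 s).

Let sumw (w : seq H) := \sum_(y <- w) y.
Let descending (a b : seq H) :=
  [/\ forall y, y \in a -> S y, forall y, y \in b -> S y & lt (sumw b) (sumw a)].

Lemma descending_cons m n : pairwise_fun descending m -> m n = head 0 (m n) :: behead (m n).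
Proof.
move=> mQ; case E: (m n) => [|a s] //; have [_ mS [le10 ne10]] := mQ n n.+1 (ltnSn n).
have sum0 : le 0 (sumw (m n.+1)) by apply: oag_sum_ge0 => y /mS /S_ge0.
by exfalso; apply: ne10; apply: oag_anti => //; rewrite E /sumw big_nil.
Qed.

Lemma descending_splice m (phi : nat -> nat) : pairwise_fun descending m ->
    {homo phi : i j / (i < j)%N} ->
    (forall k k', (k <= k')%N -> le (head 0 (m (phi k))) (head 0 (m (phi k')))) ->
  pairwise_fun descending
    (fun i => if (i < phi 0)%N then m i else behead (m (phi (i - phi 0)%N))).
Proof.
move=> mQ phi_lt phi_le.
have mS n y : y \in m n -> S y by have [mS _ _] := mQ n n.+1 (ltnSn n); apply: mS.
have behead_S n y : y \in behead (m n) -> S y by move/mem_behead; apply: mS.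
have sum_behead n : sumw (behead (m n)) = sumw (m n) - head 0 (m n).
  rewrite [in X in _ = X - _](descending_cons n mQ) /sumw big_cons.
  by rewrite [X in X - _]addrC addrK.
have head_S n : S (head 0 (m n)) by apply: (mS n); rewrite (descending_cons n mQ) mem_head.
have phi0_le k : (phi 0 <= phi k)%N by case: k => // k; apply/ltnW/phi_lt.
move=> i j ij; case: ltnP => i_lt; case: ltnP => j_lt.
- exact: mQ.
- split; [exact: mS | exact: behead_S |].
  rewrite sum_behead -[sumw (m i)]subr0; apply: oag_lt_le_sub; last exact: S_ge0.
  by have [_ _] := mQ _ _ (leq_trans i_lt (phi0_le (j - phi 0)%N)).
- by have := leq_ltn_trans i_lt (ltn_trans ij j_lt); rewrite ltnn.
split; [exact: behead_S | exact: behead_S|].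
have k_lt : (i - phi 0 < j - phi 0)%N by rewrite ltn_sub2r // (leq_ltn_trans i_lt ij).
rewrite !sum_behead; apply: oag_lt_le_sub; last exact/phi_le/ltnW.
by have [_ _] := mQ _ _ (phi_lt _ _ k_lt).
Qed.

(* Dropping the first letters along a subsequence of a minimal bad sequence whose first
   letters increase yields a bad sequence that is shorter at index phi 0. *)
Lemma no_descending_words : ~ exists u, pairwise_fun descending u.
Proof.
move=> /(minimal_pairwise_fun size) [m [mQ mmin]].
have head_S n : S (head 0 (m n)).
  have [mS _ _] := mQ n n.+1 (ltnSn n); apply: mS.
  by rewrite (descending_cons n mQ) mem_head.
have [phi [phi_lt phi_le]] := well_ordered_monotone_subseq wS head_S.
pose v i := if (i < phi 0)%N then m i else behead (m (phi (i - phi 0)%N)).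
have vm i : (i < phi 0)%N -> v i = m i by rewrite /v => ->.
have := mmin (phi 0%N) v (descending_splice mQ phi_lt phi_le) vm.
by rewrite /v ltnn subnn [m (phi 0%N)](descending_cons _ mQ) /= ltnn.
Qed.

Lemma well_ordered_finite_sums : well_ordered (finite_sums S).
Proof.
apply: well_ordered_descending => x xS xdesc; apply: no_descending_words.
have [w wP] :
    {w : nat -> seq H & forall n, (forall y, y \in w n -> S y) /\ x n = sumw (w n)}.
  apply: (@choice _ _ (fun n w => (forall y, y \in w -> S y) /\ x n = sumw w)) => n.
  by have [w ? ?] := xS n; exists w.
exists w => i j ij; split; [exact: (wP i).1|exact: (wP j).1|].
rewrite -(wP i).2 -(wP j).2; move: i j ij.
by apply: (homo_ltn (r := fun a b => lt b a)) => // b a c ba cb; apply: oag_lt_trans ba.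
Qed.

End Neumann.
End OrderedGroup.

(** * Inverses in K(t^H, beta) *)

Section HahnInverse.
Variables (G : zmodType) (le : G -> G -> Prop) (A : G -> Prop).
Variables (H : zmodType) (rho : G -> H) (alpha : H -> G).
Variables (K : fieldType) (sigma : G -> K).
Hypotheses (ordG : ordered_abelian_group le) (convA : convex_subgroup le A).
Hypotheses (rhoA : quotient_projection rho A) (alphaT : transversal rho alpha).
Hypothesis sigma_neq0 : forall a, A a -> sigma a != 0.

Local Notation leH := (leH le rho).

Lemma rhoD x y : rho (x + y) = rho x + rho y. Proof. by case: rhoA. Qed.

Lemma rhoB x y : rho (x - y) = rho x - rho y.
Proof. by rewrite -[in RHS](subrK y x) rhoD addrK. Qed.

Lemma rho_surj h : exists g, rho g = h. Proof. by case: rhoA => _ + _; apply. Qed.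

Lemma rho_eq0 g : rho g = 0 <-> A g. Proof. by case: rhoA => _ _; apply. Qed.

Lemma leH_ordered : ordered_abelian_group leH.
Proof.
split.
- by move=> h; have [g <-] := rho_surj h; exists g, g; split=> //; apply: oag_refl ordG _.
- move=> _ _ [g [g' [<- <- gg']]] [k [k' [Ek Ek' kk']]].
  have Ag'k : A (g' - k) by apply/rho_eq0; rewrite rhoB Ek subrr.
  have Ak'g : A (k' - g) by apply/rho_eq0; rewrite rhoB Ek' subrr.
  have Agk : A (g - k).
    case: convA => [[A0 AB] Aconv]; apply: (Aconv (g - k') (g' - k)).
    - by rewrite -opprB -sub0r; apply: AB.
    - exact: Ag'k.
    - by apply: (oag_addl ordG); apply: (oag_opp ordG).
    - exact: (oag_addr ordG).
  by apply/eqP; rewrite -Ek -subr_eq0 -rhoB; apply/eqP; apply/rho_eq0.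
- move=> _ _ _ [g1 [g1' [<- <- l1]]] [g2 [g2' [E2 <- l2]]].
  exists (g1 + (g2 - g1')), g2'; split => //.
    by rewrite rhoD rhoB E2 subrr addr0.
  apply: (@oag_trans _ _ ordG g2) l2.
  by have := oag_addr ordG (g2 - g1') l1; rewrite subrKC.
- move=> h h'; have [g <-] := rho_surj h; have [g' <-] := rho_surj h'.
  by case: (oag_total ordG g g') => ?; [left|right]; [exists g, g'|exists g', g].
- move=> _ _ h [g [g' [<- <- gg']]]; have [k <-] := rho_surj h.
  by exists (g + k), (g' + k); rewrite !rhoD; split=> //; apply: (oag_addr ordG).
Qed.

Definition twist (h h' : H) : K := sigma (- beta alpha h h').

Lemma twist_neq0 h h' : twist h h' != 0.
Proof.
case: convA => [[A0 AB] _]; apply: sigma_neq0; rewrite -sub0r; apply: AB => //.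
by apply/rho_eq0; case: alphaT => ralpha _; rewrite /beta !rhoB !ralpha addrAC addrK subrr.
Qed.

Lemma twistC h h' : twist h h' = twist h' h.
Proof. by rewrite /twist /beta (addrC h' h) (addrAC (alpha (h + h'))). Qed.

Section Inverse.
Variables (f : H -> K) (h0 : H).
Hypotheses (f_wo : support_well_ordered le rho f) (fh0 : f h0 != 0).
Hypothesis h0_min : forall h, f h != 0 -> leH h0 h.

Definition shifted_support : set H := [set s | f (s + h0) != 0 /\ s <> 0].

Definition inv_support : set H := [set m | finite_sums shifted_support (m + h0)].

Lemma inv_support_wo : well_ordered leH inv_support.
Proof.
apply: (well_ordered_shift leH_ordered); apply: (well_ordered_finite_sums leH_ordered).
- apply: (@well_ordered_sub _ _ _ [set s | f (s + h0) != 0]); first by move=> s [].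
  exact: (well_ordered_shift leH_ordered (X := [set h | f h != 0]) f_wo).
- by move=> s [/h0_min h0s _]; apply: (oag_addr_cancel leH_ordered (z := h0)); rewrite add0r.
Qed.

Definition antidiagonal l : seq H :=
  projT1 (cid (well_ordered_antidiagonal leH_ordered l inv_support_wo f_wo)).

Lemma antidiagonalP l : uniq (antidiagonal l) /\
  forall h, h \in antidiagonal l <-> inv_support h /\ f (l - h) != 0.
Proof. exact: projT2 (cid (well_ordered_antidiagonal leH_ordered l inv_support_wo f_wo)). Qed.

Lemma antidiagonal_le m h : h \in antidiagonal (m + h0) -> leH h m.
Proof.
move=> /(antidiagonalP _).2 [_ /h0_min] /(oag_addr leH_ordered (h - h0)).
by rewrite subrKC addrA subrK addrK.
Qed.

Definition inv_rel (a b : H) := inv_support a /\ ltG leH a b.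

Lemma inv_rel_wf : well_founded inv_rel.
Proof. exact: (@well_ordered_wf _ _ leH_ordered inv_support inv_support_wo). Qed.

Definition extend_below m (rec : forall h, inv_rel h m -> K) h : K :=
  if pselect (inv_rel h m) is left p then rec h p else 0.

(* The coefficient of t^(m + h0) in inv_coef * f, whose h = m term is
   inv_coef m * f h0 * twist m h0, solved for inv_coef m. *)
Definition inv_coef_body m (rec : forall h, inv_rel h m -> K) : K :=
  if `[< inv_support m >] then
    (one_series K (m + h0) - \sum_(h <- antidiagonal (m + h0) | h != m)
        extend_below rec h * f (m + h0 - h) * twist h (m + h0 - h)) / (f h0 * twist m h0)
  else 0.

Definition inv_coef : H -> K := Fix inv_rel_wf (fun _ => K) inv_coef_body.

Lemma inv_coefE m : inv_coef m = if `[< inv_support m >] then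
    (one_series K (m + h0) - \sum_(h <- antidiagonal (m + h0) | h != m)
        inv_coef h * f (m + h0 - h) * twist h (m + h0 - h)) / (f h0 * twist m h0)
  else 0.
Proof.
rewrite /inv_coef Fix_eq; last first.
  move=> x r1 r2 r12; rewrite /inv_coef_body.
  suff -> : extend_below r1 = extend_below r2 by [].
  by apply: funext => h; rewrite /extend_below; case: pselect.
rewrite /inv_coef_body; case: asboolP => // m_supp; congr ((_ - _) / _).
rewrite big_seq_cond [RHS]big_seq_cond; apply: eq_bigr => h /andP [h_in hm].
rewrite /extend_below; case: pselect => // - []; split.
  by have [] := ((antidiagonalP _).2 h).1 h_in.
by split; [apply: antidiagonal_le | apply/eqP].
Qed.

Lemma inv_coef_support m : inv_coef m != 0 -> inv_support m.
Proof. by rewrite inv_coefE; case: asboolP => // _; rewrite eqxx. Qed.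

Lemma inv_coef_convolution_support m : inv_support m ->
  \sum_(h <- antidiagonal (m + h0)) inv_coef h * f (m + h0 - h) * twist h (m + h0 - h)
    = one_series K (m + h0).
Proof.
move=> m_supp.
have m_in : m \in antidiagonal (m + h0).
  by apply/(antidiagonalP _).2; rewrite [m + h0]addrC addrK.
rewrite (bigD1_seq m m_in (antidiagonalP _).1) /= [m + h0 - m]addrC addKr.
have := inv_coefE m; rewrite asboolT // => ->.
by rewrite -mulrA divfK ?subrK // mulf_neq0 // twist_neq0.
Qed.

Lemma inv_coef_convolution l :
  \sum_(h <- antidiagonal l) inv_coef h * f (l - h) * twist h (l - h) = one_series K l.
Proof.
have [l_supp|l_supp] := pselect (inv_support (l - h0)).
  by have := inv_coef_convolution_support l_supp; rewrite subrK.
rewrite big1_seq /one_series.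
  by case: eqP => // l0; case: l_supp; rewrite /inv_support /= subrK l0; apply: finite_sums0.
move=> h /andP [_ /(antidiagonalP _).2 [h_supp fl]]; case: l_supp.
rewrite /inv_support /= subrK -[l](subrK (h + h0) l).
have [s0|s0] := eqVneq (l - (h + h0)) 0; first by rewrite s0 add0r.
rewrite addrC; apply: finite_sumsD => //.
by split; [rewrite opprD addrA subrK | apply/eqP].
Qed.

Lemma inv_coef_mul_left l : prod_coef alpha sigma inv_coef f l (one_series K l).
Proof.
exists [seq h <- antidiagonal l | inv_coef h != 0]; split.
- exact: filter_uniq (antidiagonalP l).1.
- move=> h; rewrite mem_filter; split=> [/andP [-> /(antidiagonalP l).2 []] //|[gh fh]].
  by rewrite gh /=; apply/(antidiagonalP l).2; split=> //; apply: inv_coef_support.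
rewrite -(inv_coef_convolution l) big_filter [RHS]big_mkcond; apply: eq_bigr => h _.
by case: eqP => [->|]; rewrite ?mul0r.
Qed.

Lemma inv_coef_mul_right l : prod_coef alpha sigma f inv_coef l (one_series K l).
Proof.
have [s [s_uniq s_mem ->]] := inv_coef_mul_left l.
have reflect_inj : injective (fun h : H => l - h) by move=> a b /addrI /oppr_inj.
exists [seq l - h | h <- s]; split.
- by rewrite map_inj_uniq.
- move=> h; rewrite -{1}(subKr l h) (mem_map reflect_inj) s_mem subKr.
  by split=> -[].
rewrite big_map; apply: eq_bigr => h _.
by rewrite subKr -/(twist _ _) twistC [inv_coef h * _]mulrC.
Qed.

Lemma inv_coef_wo : support_well_ordered le rho inv_coef.
Proof. exact: (well_ordered_sub inv_coef_support inv_support_wo). Qed.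

Section Cardinality.
Variables (D : Type) (e : nat -> D) (iX : H -> D).
Hypothesis e_inj : injective e.
Hypothesis iX_inj : forall h h', f h != 0 -> f h' != 0 -> iX h = iX h' -> h = h'.

Lemma inv_coef_card : support_card_le_delta D inv_coef.
Proof.
have [code code_inj] := seq_code e_inj.
have [word wordP] : {word : H -> seq H & forall m, inv_support m ->
    (forall y, y \in word m -> shifted_support y) /\ m + h0 = \sum_(y <- word m) y}.
  apply: (@choice _ _ (fun m w => inv_support m ->
    (forall y, y \in w -> shifted_support y) /\ m + h0 = \sum_(y <- w) y)) => m.
  have [[w wS wsum]|nm] := EM (inv_support m); last by exists [::].
  by exists w => _; split.
exists (fun m => code [seq iX (s + h0) | s <- word m]).
move=> m m' /inv_coef_support m_supp /inv_coef_support m'_supp /code_inj E.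
have [wS wsum] := wordP m m_supp; have [wS' wsum'] := wordP m' m'_supp.
apply: (addIr h0); rewrite wsum wsum'; congr (\sum_(y <- _) y).
pose Sb := [pred s | `[< shifted_support s >]].
have word_Sb w : (forall y, y \in w -> shifted_support y) -> w \in [pred w | all (mem Sb) w].
  by move=> wS''; apply/allP => y /wS'' ys; apply/asboolP.
apply: (inj_in_map (A := Sb)) E; rewrite ?word_Sb //.
move=> s s' /asboolP [fs _] /asboolP [fs' _] /(iX_inj fs fs').
exact: addIr.
Qed.

Lemma series_inverse : exists g, in_series_ring le rho D g /\ is_inverse alpha sigma f g.
Proof.
exists inv_coef; split; first by split; [exact: inv_coef_wo | exact: inv_coef_card].
by split; [exact: inv_coef_mul_right | exact: inv_coef_mul_left].
Qed.

End Cardinality.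

End Inverse.

End HahnInverse.

Theorem proposition2p5
  (G : zmodType) (le : G -> G -> Prop) (A : G -> Prop)
  (H : zmodType) (rho : G -> H) (alpha : H -> G)
  (K : fieldType) (v : K -> G) (p : nat) (sigma : G -> K) (D : Type)
  (hG : ordered_abelian_group le)
  (hA : smallest_nonzero_convex_subgroup le A)
  (hrho : quotient_projection rho A)
  (halpha : transversal rho alpha)
  (hv : valuation_onto le v A)
  (hchar : char0 K)
  (hres : residue_char le v p)
  (hcomplete : omega_pseudo_complete le v)
  (hsigma : cross_section v sigma A)
  (hD : infinite_cardinal D)
  (f : H -> K)
  (hf : in_series_ring le rho D f)
  (hf0 : exists h, f h != 0) :
  exists g : H -> K, in_series_ring le rho D g /\ is_inverse alpha sigma f g.
Proof.
case: hA => convA _ _; case: hsigma => _ sigma_neq0 _.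
case: hf => f_wo [iX iX_inj]; case: hD => e e_inj; case: hf0 => h1 fh1.
have [h0 [_ fh0 h0_min]] := f_wo setT (ex_intro _ h1 (conj I fh1)).
exact: (series_inverse hG convA hrho halpha sigma_neq0 f_wo fh0
  (fun h => h0_min h I) e_inj iX_inj).
Qed.
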